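(* If $f\in{\rm elh}(\mathbb{C})$ is a polynomial, then the map $L_f:{\rm elh}(\mathbb{C})\to{\rm elh}(\mathbb{C})$, $L_f(g)=f\circ g$, is injective.
   Context: ${\rm elh}(\mathbb{C})$ denotes the set of entire functions with nowhere vanishing derivative and derivative $1$ at $0$. *)

From Stdlib Require Import Reals.
From Coquelicot Require Export Coquelicot.

Definition elh (f : C -> C) : Prop :=
  exists f' : C -> C,
    (forall z : C, is_derive f z (f' z)) /\
    (forall z : C, f' z <> (RtoC 0)) /\
    f' (RtoC 0) = (RtoC 1).

Definition is_polynomial (f : C -> C) : Prop :=
  exists (n : nat) (a : nat -> C),
    forall z : C, f z = sum_n (fun k => mult (a k) (pow_n z k)) n.

(* The polynomial f has a polynomial derivative without zeros, which over the
   algebraically closed field C must be constant; since f'(0) = 1 we get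
   f' = 1 and f(z) = z + f(0). A translation is injective, so f o g = f o h
   forces g = h. *)

From mathcomp Require Import all_boot all_algebra.
From mathcomp Require Import complex.
From mathcomp Require Import Rstruct.
From Stdlib Require Import Rdefinitions.
From Stdlib Require Import FunctionalExtensionality.
From Coquelicot Require Import Coquelicot.
Import GRing.Theory Num.Theory.
Local Open Scope ring_scope.

Lemma rootless_deriv_XaddC (F : numClosedFieldType) (p : {poly F}) :
  (forall x, ~~ root p^`() x) -> p^`().[0] = 1 -> p = 'X + (p`_0)%:P.
Proof.
move=> rootless dp0.
have /eqP size_dp : size p^`() == 1%N.
  by apply/negPn/negP => /closed_rootP [x]; apply/negP.
have dp : p^`() = 1 by rewrite [LHS]size1_polyC ?size_dp // -horner_coef0 dp0.
apply/polyP => -[|[|i]]; rewrite coefD coefX coefC /= ?add0r ?addr0 //.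
  by have := coef_deriv p 0; rewrite dp coef1.
apply/eqP; have := coef_deriv p i.+1; rewrite dp coef1 /= => /esym/eqP.
by rewrite mulrn_eq0.
Qed.

Definition to_complex (z : C) : R[i] := Complex z.1 z.2.
Definition of_complex (w : R[i]) : C := (complex.Re w, complex.Im w).

Lemma to_complexK : cancel to_complex of_complex.
Proof. by case. Qed.

Lemma of_complexK : cancel of_complex to_complex.
Proof. by case. Qed.

Lemma of_complexD (u v : R[i]) :
  of_complex (u + v) = plus (of_complex u) (of_complex v).
Proof. by case: u => a b; case: v. Qed.

Lemma of_complexM (u v : R[i]) :
  of_complex (u * v) = mult (of_complex u) (of_complex v).
Proof. by case: u => a b; case: v. Qed.

Lemma to_complexD (x y : C) :
  to_complex (plus x y) = to_complex x + to_complex y.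
Proof. by case: x => a b; case: y. Qed.

Lemma to_complexM (x y : C) :
  to_complex (mult x y) = to_complex x * to_complex y.
Proof. by case: x => a b; case: y. Qed.

Lemma to_complex_pow (z : C) k : to_complex (pow_n z k) = to_complex z ^+ k.
Proof. by elim: k => [|k IH] //=; rewrite to_complexM IH exprS. Qed.

Lemma to_complex_sum (F : nat -> C) n :
  to_complex (sum_n F n) = \sum_(k < n.+1) to_complex (F k).
Proof.
elim: n => [|n IH]; first by rewrite sum_O big_ord1.
by rewrite sum_Sn to_complexD IH [RHS]big_ord_recr.
Qed.

(* Coquelicot equips [C] with two normed-module structures that are equal but
   not convertible: [C_NormedModule], used in [elh], and the generic
   [AbsRing_NormedModule C_AbsRing], for which the product rule is stated. *)
Lemma is_derive_C_NormedModule (f : C -> C) (z df : C) :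
  @is_derive C_AbsRing (AbsRing_NormedModule C_AbsRing) f z df ->
  @is_derive C_AbsRing C_NormedModule f z df.
Proof. by move=> [[lin_plus lin_scal lin_norm] domin]; do !split. Qed.

Lemma is_derive_horner (p : {poly R[i]}) (z : C_AbsRing) :
  is_derive (fun y : C_AbsRing => of_complex p.[to_complex y] : C_AbsRing) z
            (of_complex p^`().[to_complex z]).
Proof.
elim/poly_ind: p => [|p c IH].
  rewrite deriv0 horner0.
  apply: (is_derive_ext (fun=> zero)) => [y|]; last exact: is_derive_const.
  by rewrite horner0.
have := is_derive_plus _ _ _ _ _
  (is_derive_mult _ _ _ _ _ IH (is_derive_id z) Cmult_comm)
  (is_derive_const (of_complex c : C_AbsRing) z).
rewrite derivMXaddC hornerD hornerMX of_complexD of_complexM to_complexK.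
rewrite plus_zero_r mult_one_r plus_comm; apply: is_derive_ext => y.
by rewrite hornerMXaddC of_complexD of_complexM to_complexK.
Qed.

Lemma polynomial_horner (f : C -> C) : is_polynomial f ->
  exists p : {poly R[i]}, forall z, f z = of_complex p.[to_complex z].
Proof.
move=> [n [a f_sum]]; exists (\poly_(k < n.+1) to_complex (a k)) => z.
rewrite horner_poly f_sum -[LHS]to_complexK to_complex_sum.
by congr of_complex; apply: eq_bigr => k _; rewrite to_complexM to_complex_pow.
Qed.

Lemma elh_polynomial_translation (f : C -> C) : elh f -> is_polynomial f ->
  forall z, f z = plus z (f zero).
Proof.
move=> [f' [df [f'_neq0 f'0]]] /polynomial_horner [p f_horner].
have f'_horner z : f' z = of_complex p^`().[to_complex z].
  rewrite -(is_C_derive_unique _ _ _ (df z)); apply: is_C_derive_unique.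
  apply: (is_derive_ext _ _ _ _ (fun y => esym (f_horner y))).
  exact/is_derive_C_NormedModule/is_derive_horner.
have p_translation : p = 'X + (p`_0)%:P.
  apply: rootless_deriv_XaddC => [x|].
    apply/negP => /eqP dp_x; apply: (f'_neq0 (of_complex x)).
    by rewrite f'_horner of_complexK dp_x.
  apply: (can_inj of_complexK).
  by rewrite -[0]/(to_complex (RtoC 0)) -f'_horner f'0.
by move=> z; rewrite !f_horner p_translation !hornerE of_complexD to_complexK.
Qed.

Theorem proposition3p21 (f : C -> C) :
  elh f -> is_polynomial f ->
  forall g h : C -> C, elh g -> elh h ->
    (fun z => f (g z)) = (fun z => f (h z)) -> g = h.
Proof.
move=> elh_f poly_f g h _ _ fg_fh.
have f_translation := elh_polynomial_translation _ elh_f poly_f.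
have f_inj : injective f.
  move=> u v; rewrite [f u]f_translation [f v]f_translation.
  move=> /(f_equal to_complex); rewrite !to_complexD.
  by move=> /addIr /(can_inj to_complexK).
apply: functional_extensionality => z; apply: f_inj.
exact: (congr1 (@^~ z) fg_fh).
Qed.
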